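(* Let $c\in[\frac12,1)$ and let $d,\delta$ be positive integers with $d\ge\delta$. Let $G$ be a graph with maximum degree $\delta$ and $w:V(G)\to[0,1]$ a weight function with $w(V(G))=1$, and assume $G$ has no $d$-bounded $(w,c)$-balanced separator. Let $u,v\in V(G)$ with $u\in A_v$. Then either $u$ and $v$ are star twins, or $B_v\cup C_v\subseteq B_u\cup C_u$.
   Context: For $X\subseteq V(G)$, $w(X)=\sum_{x\in X}w(x)$; $N[v]=N(v)\cup\{v\}$; $N^d[v]$ is the set of vertices at distance at most $d$ from $v$. A set $X$ is $d$-bounded if $X\subseteq N^d[v]$ for some $v$. $X$ is a $(w,c)$-balanced separator if every connected component $D$ of $G\setminus X$ has $w(D)\le c$. For $v\in V(G)$, the canonical star separation $S_v=(A_v,C_v,B_v)$ is: $B_v$ the (under these assumptions unique) largest-weight connected component of $G\setminus N[v]$, $C_v$ the set consisting of $v$ and every vertex of $N(v)$ with a neighbor in $B_v$, and $A_v=V(G)\setminus(B_v\cup C_v)$. Two vertices $u,v$ are star twins if $B_u=B_v$, $C_u\setminus\{u\}=C_v\setminus\{v\}$ and $A_u\setminus\{v\}=A_v\setminus\{u\}$. *)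

From HB Require Import structures.
From mathcomp Require Import all_boot all_order all_algebra.
Set Implicit Arguments. Unset Strict Implicit. Unset Printing Implicit Defensive.
Import Order.TTheory GRing.Theory Num.Theory.
Local Open Scope ring_scope.

(* A finite simple graph: vertex type T : finType, adjacency e : rel T
   (symmetry and irreflexivity are hypotheses of the theorem). *)
Section Graph.
Variables (T : finType) (e : rel T).

Definition nbh (v : T) : {set T} := [set x | e v x].
Definition cnbh (v : T) : {set T} := v |: nbh v.

Fixpoint ball (k : nat) (v : T) : {set T} :=
  if k is k'.+1 then ball k' v :|: [set y | [exists x in ball k' v, e x y]]
  else [set v].

Definition bounded (d : nat) (X : {set T}) : Prop :=
  exists v : T, X \subset ball d v.

Definition rel_minus (X : {set T}) : rel T :=
  fun a b => [&& e a b, a \notin X & b \notin X].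

Definition is_comp (X D : {set T}) : bool :=
  [exists x, (x \notin X) && (D == [set y | connect (rel_minus X) x y])].

Section Weight.
Variables (R : numDomainType) (w : T -> R).

Definition wt (X : {set T}) : R := \sum_(x in X) w x.

Definition balanced_sep (c : R) (X : {set T}) : Prop :=
  forall D : {set T}, is_comp X D -> wt D <= c.

(* B_v: a largest-weight component of G \ N[v] (unique under the
   theorem's assumptions); set0 if G \ N[v] is empty *)
Definition Bs (v : T) : {set T} :=
  odflt set0 [pick D : {set T} | is_comp (cnbh v) D &&
     [forall D' : {set T}, is_comp (cnbh v) D' ==> (wt D' <= wt D)]].

Definition Cs (v : T) : {set T} :=
  v |: [set x in nbh v | [exists y in Bs v, e x y]].

Definition As (v : T) : {set T} := ~: (Bs v :|: Cs v).

Definition star_twins (u v : T) : Prop :=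
  [/\ Bs u = Bs v, Cs u :\ u = Cs v :\ v & As u :\ v = As v :\ u].

End Weight.
End Graph.

From HB Require Import structures.
From mathcomp Require Import all_boot all_order all_algebra.
From mathcomp Require Import lra.
Set Implicit Arguments. Unset Strict Implicit. Unset Printing Implicit Defensive.
Import Order.TTheory GRing.Theory Num.Theory.
Local Open Scope ring_scope.

(* Since N[v] is d-bounded, it is not a (w,c)-balanced separator, so B_v is a
   component of G \ N[v] of weight > c >= 1/2; two components of weight > 1/2
   of the same G \ X must meet, hence coincide.  Every neighbour of B_v lies in
   B_v ∪ C_v, so for u ∈ A_v the set B_v avoids N[u], is connected in G \ N[u],
   and therefore lies in the heavy component B_u.  Each vertex of C_v \ {v} has
   a neighbour in B_v ⊆ B_u, hence lies in B_u ∪ C_u; this gives the inclusion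
   unless v ∈ A_u, and then the symmetric argument forces B_u = B_v and
   C_u \ {u} = C_v \ {v}, i.e. u and v are star twins. *)

Lemma connect_sub_closed (T : finType) (r r' : rel T) (A : {pred T}) x y :
  x \in A -> (forall a b, a \in A -> r a b -> (b \in A) && r' a b) ->
  connect r x y -> connect r' x y.
Proof.
move=> Ax closedA /connectP[p + ->]; elim: p x Ax => [|z p IHp] x Ax /=.
  by rewrite connect0.
case/andP=> /(closedA _ _ Ax)/andP[Az r'xz] /(IHp _ Az).
exact: connect_trans (connect1 r'xz).
Qed.

Section Components.
Variables (T : finType) (e : rel T).
Hypothesis e_sym : symmetric e.

Definition comp (X : {set T}) (x : T) : {set T} :=
  [set y | connect (rel_minus e X) x y].

Lemma rel_minus_sym (X : {set T}) : symmetric (rel_minus e X).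
Proof.
by move=> a b; rewrite /rel_minus /= e_sym; case: (e b a) (a \in X) (b \in X) => [] [] [].
Qed.

Lemma is_compP (X D : {set T}) : is_comp e X D -> exists2 x, x \notin X & D = comp X x.
Proof. by case/existsP=> x /andP[Xx /eqP->]; exists x. Qed.

Lemma is_comp_comp (X : {set T}) x : x \notin X -> is_comp e X (comp X x).
Proof. by move=> Xx; apply/existsP; exists x; rewrite Xx eqxx. Qed.

Lemma comp_notin (X : {set T}) x y : x \notin X -> y \in comp X x -> y \notin X.
Proof.
move=> Xx; rewrite inE => /connectP[p]; case/lastP: p => [_ -> // | p z].
by rewrite last_rcons rcons_path => /andP[_ /and3P[_ _ Xz]] ->.
Qed.

Lemma is_comp_notin (X D : {set T}) y : is_comp e X D -> y \in D -> y \notin X.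
Proof. by case/is_compP=> x Xx ->; exact: comp_notin. Qed.

Lemma is_comp_eq (X D : {set T}) y : is_comp e X D -> y \in D -> D = comp X y.
Proof.
case/is_compP=> x _ -> {D}; rewrite inE => xy; apply/setP=> z; rewrite !inE.
apply/idP/idP; last exact: connect_trans.
by rewrite (sym_connect_sym (rel_minus_sym X)) in xy; exact: connect_trans.
Qed.

Lemma is_comp_adj (X D : {set T}) y z :
  is_comp e X D -> y \in D -> e y z -> z \notin X -> z \in D.
Proof.
move=> compD Dy yz Xz; rewrite (is_comp_eq compD Dy) inE connect1 //.
by rewrite /rel_minus yz Xz (is_comp_notin compD Dy).
Qed.

Lemma is_comp_meet (X D1 D2 : {set T}) y :
  is_comp e X D1 -> is_comp e X D2 -> y \in D1 -> y \in D2 -> D1 = D2.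
Proof.
by move=> comp1 comp2 D1y D2y; rewrite (is_comp_eq comp1 D1y) (is_comp_eq comp2 D2y).
Qed.

Lemma comp_sub_comp (X Y : {set T}) x :
  x \notin X -> [disjoint comp X x & Y] -> comp X x \subset comp Y x.
Proof.
move=> Xx disjY; apply/subsetP=> y; rewrite !inE.
have xx : x \in comp X x by rewrite inE connect0.
apply: connect_sub_closed xx _ => a b Xa /and3P[ab _ Xb].
have Xxb : b \in comp X x by apply: is_comp_adj (is_comp_comp Xx) Xa ab Xb.
by rewrite Xxb /rel_minus ab !(disjointFr disjY).
Qed.

Lemma cnbh_sub_ball d v : (0 < d)%N -> cnbh e v \subset ball e d v.
Proof.
case: d => // d _; elim: d => [|d IHd].
  apply/subsetP=> x; rewrite !inE => /orP[-> // | vx].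
  by apply/orP; right; apply/existsP; exists v; rewrite !inE eqxx.
by apply: subset_trans IHd _; exact: subsetUl.
Qed.

End Components.

Section Weights.
Variables (R : numDomainType) (T : finType) (w : T -> R).
Hypothesis w_ge0 : forall x, 0 <= w x.

Lemma wt_subset (A B : {set T}) : A \subset B -> wt w A <= wt w B.
Proof.
move=> sAB; rewrite /wt [leRHS](big_setID A) /= (setIidPr sAB) lerDl.
exact: sumr_ge0.
Qed.

Lemma wt_setU (A B : {set T}) : [disjoint A & B] -> wt w (A :|: B) = wt w A + wt w B.
Proof. by move=> dAB; rewrite /wt -bigU //; apply: eq_bigl => x; rewrite !inE. Qed.

End Weights.

Lemma heavy_comp_uniq (R : realFieldType) (T : finType) (e : rel T)
    (w : T -> R) (X D1 D2 : {set T}) :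
  symmetric e -> (forall x, 0 <= w x) -> wt w setT = 1 ->
  is_comp e X D1 -> is_comp e X D2 -> 1 / 2 < wt w D1 -> 1 / 2 < wt w D2 ->
  D1 = D2.
Proof.
move=> e_sym w_ge0 wT comp1 comp2 heavy1 heavy2.
have [disj12 | /pred0Pn[y /andP[D1y D2y]]] := boolP [disjoint D1 & D2].
  exfalso; have := wt_subset w_ge0 (subsetT (D1 :|: D2)).
  by rewrite wt_setU // wT; lra.
exact: is_comp_meet comp1 comp2 D1y D2y.
Qed.

Section LargestComponent.
Variables (R : realDomainType) (T : finType) (e : rel T) (w : T -> R).

Lemma not_balanced_sep c (X : {set T}) :
  ~ balanced_sep e w c X -> exists2 D, is_comp e X D & c < wt w D.
Proof.
move=> unbal; have [/existsP[D /andP[]] | /existsPn small] :=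
  boolP [exists D, is_comp e X D && (c < wt w D)]; first by exists D.
by case: unbal => D compD; move: (small D); rewrite compD /= -leNgt.
Qed.

Lemma Bs_max v (D : {set T}) :
  is_comp e (cnbh e v) D -> is_comp e (cnbh e v) (Bs e w v) /\ wt w D <= wt w (Bs e w v).
Proof.
move=> compD; rewrite /Bs; case: pickP => [B /andP[compB /forallP maxB] | noB].
  by split=> //; exact: implyP (maxB D) compD.
have [B compB maxB] := arg_maxP (wt w) compD.
have /negP[] := noB B; rewrite compB /=.
by apply/forallP=> D'; apply/implyP; exact: maxB.
Qed.

Lemma Bs_heavy c d v :
  (0 < d)%N -> ~ (exists X, bounded e d X /\ balanced_sep e w c X) ->
  is_comp e (cnbh e v) (Bs e w v) /\ c < wt w (Bs e w v).
Proof.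
move=> d_gt0 no_sep.
have [|D compD heavyD] := not_balanced_sep (c := c) (X := cnbh e v).
  move=> bal; apply: no_sep; exists (cnbh e v); split=> //.
  by exists v; exact: cnbh_sub_ball.
have [compB DleB] := Bs_max compD; split=> //; exact: lt_le_trans DleB.
Qed.

End LargestComponent.

Lemma setCU_setD1_swap (T : finType) (B1 B2 C1 C2 : {set T}) (u v : T) :
  B1 = B2 -> u \in C1 -> v \in C2 -> C1 :\ u = C2 :\ v ->
  ~: (B1 :|: C1) :\ v = ~: (B2 :|: C2) :\ u.
Proof.
move=> <- C1u C2v /setP EC; apply/setP=> x; move: (EC x); rewrite !inE.
case: (eqVneq x u) => [-> | xu]; first by rewrite C1u orbT /= ?andbF.
case: (eqVneq x v) => [-> | xv]; first by rewrite C2v orbT /= ?andbF.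
by move=> /= ->.
Qed.

Section StarSeparations.
Variables (R : realFieldType) (T : finType) (e : rel T) (w : T -> R).
Hypothesis e_sym : symmetric e.
Hypothesis w_ge0 : forall x, 0 <= w x.
Hypothesis wT : wt w setT = 1.
Hypothesis Bs_comp : forall v, is_comp e (cnbh e v) (Bs e w v).
Hypothesis Bs_gt_half : forall v, 1 / 2 < wt w (Bs e w v).

Local Notation B := (Bs e w).
Local Notation C := (Cs e w).
Local Notation A := (As e w).

Lemma mem_Cs_self v : v \in C v.
Proof. by rewrite !inE eqxx. Qed.

Lemma disjoint_Bs_Cs v : [disjoint B v & C v].
Proof.
apply/pred0P=> x /=; apply/negbTE/andP=> [[Bx Cx]].
have := is_comp_notin (Bs_comp v) Bx; rewrite !inE.
by move: Cx; rewrite !inE => /orP[-> | /andP[-> _]]; rewrite ?orbT.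
Qed.

Lemma mem_As v x : (x \in A v) = (x \notin B v) && (x \notin C v).
Proof. by rewrite !inE negb_or. Qed.

Lemma adj_Bs_sub v x y : e x y -> y \in B v -> x \in B v :|: C v.
Proof.
move=> xy By; rewrite inE; case: (boolP (x \in cnbh e v)) => [|Nx].
  rewrite !inE => /orP[-> | vx]; first by rewrite orbT.
  apply/orP; right; rewrite vx /=; apply/orP; right.
  by apply/existsP; exists y; rewrite By.
by rewrite (is_comp_adj e_sym (Bs_comp v) By _ Nx) // e_sym.
Qed.

Lemma disjoint_Bs_cnbh u v : u \in A v -> [disjoint B v & cnbh e u].
Proof.
rewrite inE => BCu; apply/pred0P=> y /=; apply/negbTE/andP=> [[By]].
rewrite !inE => /orP[/eqP yu | uy].
  by move: BCu; rewrite -yu inE By.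
by move: BCu; rewrite (adj_Bs_sub uy By).
Qed.

Lemma Bs_sub_of_As u v : u \in A v -> B v \subset B u.
Proof.
move=> Avu; have /set0Pn[b Bb] : B v != set0.
  by apply: contraTneq (Bs_gt_half v) => ->; rewrite /wt big_set0 -leNgt; lra.
have Nb : b \notin cnbh e u by rewrite (disjointFr (disjoint_Bs_cnbh Avu) Bb).
have sub_comp : B v \subset comp e (cnbh e u) b.
  rewrite (is_comp_eq e_sym (Bs_comp v) Bb) comp_sub_comp //.
    exact: is_comp_notin (Bs_comp v) Bb.
  by rewrite -(is_comp_eq e_sym (Bs_comp v) Bb) disjoint_Bs_cnbh.
suff -> : B u = comp e (cnbh e u) b by [].
apply: heavy_comp_uniq (Bs_comp u) (is_comp_comp e Nb) (Bs_gt_half u) _ => //.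
exact: lt_le_trans (Bs_gt_half v) (wt_subset w_ge0 sub_comp).
Qed.

Lemma Cs_setD1_sub_of_As u v : u \in A v -> C v :\ v \subset B u :|: C u.
Proof.
move=> Avu; apply/subsetP=> x /setD1P[xv /setU1P[/eqP | ]]; first by rewrite (negbTE xv).
case/setIdP=> _ /existsP[y /andP[By xy]].
exact: adj_Bs_sub xy (subsetP (Bs_sub_of_As Avu) y By).
Qed.

Lemma Bs_eq_of_As u v : u \in A v -> v \in A u -> B u = B v.
Proof.
by move=> Avu Auv; apply/eqP; rewrite eqEsubset; apply/andP; split; exact: Bs_sub_of_As.
Qed.

Lemma Cs_setD1_eq_of_As u v : u \in A v -> v \in A u -> C u :\ u = C v :\ v.
Proof.
have sub u' v' : u' \in A v' -> v' \in A u' -> C v' :\ v' \subset C u' :\ u'.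
  move=> Avu Auv; apply/subsetP=> x Cx; have /setD1P[_ Cvx] := Cx.
  have xu : x != u'.
    by apply: contraTneq Avu => <-; rewrite in_setC negbK in_setU Cvx orbT.
  have Bx : x \notin B u'.
    by rewrite (Bs_eq_of_As Avu Auv) (disjointFl (disjoint_Bs_Cs v') Cvx).
  have := subsetP (Cs_setD1_sub_of_As Avu) x Cx.
  by rewrite in_setU (negbTE Bx) /= => Cux; apply/setD1P.
by move=> Avu Auv; apply/eqP; rewrite eqEsubset; apply/andP; split; exact: sub.
Qed.

Lemma star_twins_of_As u v : u \in A v -> v \in A u -> star_twins e w u v.
Proof.
move=> Avu Auv; have EB := Bs_eq_of_As Avu Auv; have EC := Cs_setD1_eq_of_As Avu Auv.
split; [exact: EB | exact: EC | rewrite /As].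
exact: setCU_setD1_swap EB (mem_Cs_self _) (mem_Cs_self _) EC.
Qed.

Lemma star_twins_or_BCs_sub u v :
  u \in A v -> star_twins e w u v \/ B v :|: C v \subset B u :|: C u.
Proof.
move=> Avu; have [BCv | BCv] := boolP (v \in B u :|: C u); last first.
  by left; apply: (star_twins_of_As Avu); rewrite in_setC.
right; apply/subsetP=> x /setUP[Bx | Cx].
  by apply/setUP; left; exact: subsetP (Bs_sub_of_As Avu) x Bx.
have [-> // | xv] := eqVneq x v.
by apply: (subsetP (Cs_setD1_sub_of_As Avu)); apply/setD1P.
Qed.

End StarSeparations.

Theorem lemma4p2 (R : realFieldType) (T : finType) (e : rel T)
  (e_sym : symmetric e) (e_irr : irreflexive e)
  (c : R) (d delta : nat)
  (hc1 : 1 / 2 <= c) (hc2 : c < 1)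
  (hd : (0 < d)%N) (hdelta : (0 < delta)%N) (hdd : (delta <= d)%N)
  (hdeg : forall x : T, (#|nbh e x| <= delta)%N)
  (hdeg_attained : exists x : T, #|nbh e x| = delta)
  (w : T -> R) (hw : forall x, 0 <= w x <= 1) (hw1 : wt w setT = 1)
  (hnosep : ~ exists X : {set T}, bounded e d X /\ balanced_sep e w c X)
  (u v : T) (huv : u \in As e w v) :
  star_twins e w u v \/ (Bs e w v :|: Cs e w v \subset Bs e w u :|: Cs e w u).
Proof.
have w_ge0 x : 0 <= w x by case/andP: (hw x).
have Bs_comp y := (Bs_heavy y hd hnosep).1.
have Bs_gt_half y : 1 / 2 < wt w (Bs e w y).
  by apply: le_lt_trans hc1 _; exact: (Bs_heavy y hd hnosep).2.
exact: star_twins_or_BCs_sub.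
Qed.
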